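(* Let $\mathcal{R}$ be a fusion ring with basis $\{x_1=1,\ldots,x_m\}$ and fusion matrices $M_j$. Then the primary $1$-matrix is positive semidefinite: \[ \sum_{j=1}^m\|M_j\|\,M_j\geq 0. \]
   Context: A fusion ring is a ring $\mathcal{R}$ which is a free $\mathbb{Z}$-module with a finite basis $\{x_1=1,\ldots,x_m\}$ such that $x_ix_j=\sum_k N_{ij}^k x_k$ with $N_{ij}^k\in\mathbb{N}$; there is an involution $i\mapsto i^*$ whose $\mathbb{Z}$-linear extension is an anti-involution of $\mathcal{R}$; and the coefficient of $x_1$ in $x_ix_j$ equals $\delta_{i,j^*}$. The fusion matrix of $x_j$ is $(M_j)_{k,i}=N_{ji}^k$ and $\|M_j\|$ is its operator norm on $\mathbb{C}^m$. *)

From HB Require Import structures.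
From mathcomp Require Import all_boot all_order all_algebra.
From mathcomp Require Import boolp classical_sets reals.
From mathcomp Require Import complex.
Set Implicit Arguments. Unset Strict Implicit. Unset Printing Implicit Defensive.
Import Order.TTheory GRing.Theory Num.Theory.
Local Open Scope ring_scope.
Local Open Scope complex_scope.

(* A fusion ring with basis x_0 = 1, x_1, ..., x_m (indexed by 'I_m.+1,
   the unit being ord0); structure constants N i j k = N_{ij}^k, i.e.
   x_i x_j = \sum_k N i j k x_k. *)
Record fusion_ring (m : nat) := FusionRing {
  fr_N : 'I_m.+1 -> 'I_m.+1 -> 'I_m.+1 -> nat;
  fr_dual : 'I_m.+1 -> 'I_m.+1;
  fr_assoc : forall i j k l,
    (\sum_(p < m.+1) fr_N i j p * fr_N p k l =
     \sum_(p < m.+1) fr_N j k p * fr_N i p l)%N;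
  fr_unitl : forall j k, fr_N ord0 j k = (j == k) :> nat;
  fr_unitr : forall j k, fr_N j ord0 k = (j == k) :> nat;
  fr_dualK : forall i, fr_dual (fr_dual i) = i;
  (* its Z-linear extension is an anti-involution of the ring:
     (x_i x_j)^* = x_j^* x_i^*  and  1^* = 1 *)
  fr_dual_anti : forall i j k,
    fr_N i j k = fr_N (fr_dual j) (fr_dual i) (fr_dual k);
  fr_dual1 : fr_dual ord0 = ord0;
  fr_rigid : forall i j, fr_N i j ord0 = (i == fr_dual j) :> nat
}.

Definition fusion_matrix (R : realType) m (F : fusion_ring m) (j : 'I_m.+1)
  : 'M[complex R]_m.+1 :=
  \matrix_(k, l) ((fr_N F j l k)%:R).

Definition cvnorm (R : realType) n (v : 'cV[complex R]_n) : R :=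
  Num.sqrt (complex.Re (\sum_(k < n) `|v k ord0| ^+ 2)).

Definition opnorm (R : realType) n (A : 'M[complex R]_n) : R :=
  reals.sup [set r : R | exists v : 'cV[complex R]_n,
                           cvnorm v <= 1 /\ r = cvnorm (A *m v)]%classic.

(* Positive semidefinite complex matrix: v^* A v >= 0 for all v in C^n
   (the order on complex R means: real and nonnegative). *)
Definition psd (R : realType) n (A : 'M[complex R]_n) : Prop :=
  forall v : 'cV[complex R]_n, 0 <= ((map_mx Num.conj v)^T *m A *m v) ord0 ord0.

(** The matrix T = sum_j R_j of right multiplication by the sum of all basis
    elements is symmetric (Frobenius reciprocity) and has positive entries
    (rigidity), so by Perron's theorem it has a positive eigenvector v whose
    eigenspace is a line. The fusion matrices M_a = L_a commute with T by
    associativity, hence L_a v = d(a) v, where d is a character with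
    d(a^* ) = d(a). As v is then a positive eigenvector of both L_a and
    L_a^T = L_(a^* ) for d(a), the Schur test gives ||M_a|| = d(a). Finally
    A = sum_a d(a) M_a is real symmetric with A^2 = (sum_a d(a)^2) A, so A is a
    positive multiple of A^T A. *)

From HB Require Import structures.
From mathcomp Require Import all_boot all_order all_algebra.
From mathcomp Require Import boolp classical_sets reals.
From mathcomp Require Import complex.
From mathcomp Require Import ring lra.
Set Implicit Arguments. Unset Strict Implicit. Unset Printing Implicit Defensive.
Import Order.TTheory GRing.Theory Num.Theory.
Local Open Scope ring_scope.

Lemma sumn_mul_eq (I : finType) (f : I -> nat) (a : I) :
  (\sum_i f i * (i == a) = f a)%N.
Proof.
rewrite (bigD1 a) //= eqxx muln1 big1 ?addn0 // => i /negbTE ->.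
exact: muln0.
Qed.

Section FusionRingDuality.
Variables (m : nat) (F : fusion_ring m).
Local Notation N := (fr_N F).
Local Notation du := (fr_dual F).

Lemma fr_dual_inj : injective du.
Proof. exact: can_inj (@fr_dualK _ F). Qed.

Lemma fr_N_rot i j k : N i j (du k) = N j k (du i).
Proof.
have := fr_assoc F i j k ord0.
under eq_bigr do rewrite fr_rigid.
under [in X in _ = X -> _]eq_bigr => p _.
  rewrite fr_rigid eq_sym (can2_eq (fr_dualK F) (fr_dualK F)).
over.
by rewrite !sumn_mul_eq.
Qed.

Lemma fr_N_duall j k i : N (du j) k i = N j i k.
Proof.
by rewrite -{1}(fr_dualK F i) fr_N_rot -{1}(fr_dualK F k) fr_N_rot fr_dualK
  fr_dual_anti !fr_dualK.
Qed.

Lemma fr_N_dualr k j i : N k (du j) i = N i j k.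
Proof.
by rewrite fr_dual_anti fr_dualK -{1}(fr_dualK F j) fr_N_duall [LHS]fr_dual_anti
  !fr_dualK.
Qed.

End FusionRingDuality.

Section SymmetricPerron.
Variables (R : realType) (n : nat) (T : 'M[R]_n.+1).
Hypotheses (T_sym : T^T = T) (T_ge0 : forall i j, 0 <= T i j).
Local Notation C := (complex R).
Local Notation toC := (real_complex R).
Local Notation Tc := (map_mx toC T).
Local Open Scope sesquilinear_scope.

Let Tc_real : Tc \is a realmx.
Proof. by apply/mxOverP => i j; rewrite mxE; apply/complex_realP; exists (T i j). Qed.

Let Tc_sym : Tc \is symmetricmx.
Proof.
apply/is_hermitianmxP; rewrite expr0 scale1r; apply/matrixP => i j.
by rewrite !mxE -[in RHS]T_sym mxE.
Qed.

Let P := spectralmx Tc.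
Let s := spectral_diag Tc.

Let P_unitary : P \is unitarymx. Proof. exact: spectral_unitarymx. Qed.

Let PPt : P *m P^t* = 1%:M. Proof. exact/unitarymxP. Qed.

Let PtP : P^t* *m P = 1%:M.
Proof. by rewrite -invmx_unitary // mulVmx // unitarymx_unit. Qed.

Let Tc_spectral : Tc = P^t* *m diag_mx s *m P.
Proof.
rewrite -invmx_unitary //; apply/orthomx_spectralP.
exact: symmetric_normalmx.
Qed.

Let s_real i : s 0 i = toC (complex.Re (s 0 i)).
Proof.
rewrite RRe_real //.
by have /mxOverP := hermitian_spectral_diag_real (realsym_hermsym Tc_sym Tc_real).
Qed.

Let i0 := [arg max_(i > ord0) complex.Re (s 0 i)]%O.
Let lam := complex.Re (s 0 i0).

Let s_le_lam i : complex.Re (s 0 i) <= lam.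
Proof. by rewrite /lam /i0; case: arg_maxP => // j _; apply. Qed.

Definition quadmx (x : 'cV[C]_n.+1) := (x^t* *m Tc *m x) 0 0.
Definition sqnormmx (x : 'cV[C]_n.+1) := (x^t* *m x) 0 0.

Lemma quadmx_spectral x :
  quadmx x = \sum_i ((P *m x) i 0)^* * s 0 i * (P *m x) i 0.
Proof.
rewrite /quadmx Tc_spectral !mulmxA -map_mxM -trmx_mul mul_mx_diag -mulmxA mxE.
by apply: eq_bigr => i _; rewrite !mxE.
Qed.

Lemma sqnormmx_spectral x :
  sqnormmx x = \sum_i ((P *m x) i 0)^* * (P *m x) i 0.
Proof.
rewrite /sqnormmx -[x^t*]mulmx1 -PtP !mulmxA -map_mxM -trmx_mul -mulmxA mxE.
by apply: eq_bigr => i _; rewrite !mxE.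
Qed.

(* In the eigenbasis, lam |x|^2 - x^* Tc x = sum_i (lam - s_i) |y_i|^2 with all
   terms nonnegative; if it is <= 0 they all vanish, so y only lives on the
   lam-eigenspace. *)
Lemma rayleigh_max_eigen x :
  toC lam * sqnormmx x <= quadmx x -> Tc *m x = toC lam *: x.
Proof.
move=> hx; set y := P *m x.
have term_ge0 i : 0 <= (toC lam - s 0 i) * ((y i 0)^* * y i 0).
  apply: mulr_ge0; last by rewrite mulrC mul_conjC_ge0.
  by rewrite s_real -rmorphB ler0c subr_ge0 s_le_lam.
have sum0 : \sum_i (toC lam - s 0 i) * ((y i 0)^* * y i 0) = 0.
  apply/eqP; rewrite eq_le (sumr_ge0 _ (fun i _ => term_ge0 i)) andbT.
  suff -> : \sum_i (toC lam - s 0 i) * ((y i 0)^* * y i 0) =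
            toC lam * sqnormmx x - quadmx x by rewrite subr_le0.
  rewrite sqnormmx_spectral quadmx_spectral mulr_sumr -sumrB.
  by apply: eq_bigr => i _; ring.
have Dy : diag_mx s *m y = toC lam *: y.
  rewrite mul_diag_mx; apply/matrixP => i j; rewrite (ord1 j) [LHS]mxE [RHS]mxE.
  move/eqP: (@psumr_eq0P _ _ xpredT _ (fun i _ => term_ge0 i) sum0 i isT).
  rewrite !mulf_eq0 conjC_eq0 orbb subr_eq0 => /orP[/eqP -> // | /eqP ->].
  by rewrite !mulr0.
by rewrite Tc_spectral -!mulmxA -/y Dy -scalemxAr /y mulmxA PtP mul1mx.
Qed.

Lemma top_eigenvector : exists2 w : 'cV[C]_n.+1, w != 0 & Tc *m w = toC lam *: w.
Proof.
set e : 'cV[C]_n.+1 := delta_mx i0 0.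
exists (P^t* *m e).
  apply: contraTneq isT => w0.
  have : P *m (P^t* *m e) = e by rewrite mulmxA PPt mul1mx.
  rewrite w0 mulmx0 => /matrixP /(_ i0 0); rewrite !mxE !eqxx /= => /eqP.
  by rewrite eq_sym oner_eq0.
have De : diag_mx s *m e = s 0 i0 *: e.
  rewrite mul_diag_mx; apply/matrixP => i j; rewrite !mxE.
  by case: eqP => [-> //|_]; rewrite !mulr0.
rewrite Tc_spectral !mulmxA -[P^t* *m _ *m P *m P^t*]mulmxA PPt mulmx1.
by rewrite -mulmxA De -scalemxAr -s_real.
Qed.

Lemma sqnormmx_abs (x : 'cV[C]_n.+1) : sqnormmx (\col_k `|x k 0|) = sqnormmx x.
Proof.
rewrite /sqnormmx !mxE; apply: eq_bigr => k _.
by rewrite !mxE conj_normC -expr2 -normCKC.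
Qed.

Lemma quadmx_abs (x : 'cV[C]_n.+1) : `|quadmx x| <= quadmx (\col_k `|x k 0|).
Proof.
rewrite /quadmx !mxE; apply: (le_trans (ler_norm_sum _ _ _)).
apply: ler_sum => b _; rewrite !mxE.
rewrite mulr_suml; apply: (le_trans (ler_norm_sum _ _ _)).
rewrite mulr_suml; apply: ler_sum => a _; rewrite !mxE conj_normC !normrM.
by rewrite norm_conjC ger0_norm ?ler0c.
Qed.

Theorem symmetric_nonneg_eigenvector : exists l (u : 'I_n.+1 -> R),
  [/\ forall k, 0 <= u k, exists k, u k != 0 &
      forall k, \sum_i T k i * u i = l * u k].
Proof.
have [w w_neq0 Tw] := top_eigenvector.
set u := \col_k `|w k 0|.
have sqnorm_w_ge0 : 0 <= sqnormmx w.
  by rewrite -sqnormmx_abs /sqnormmx mxE sumr_ge0 // => k _; rewrite !mxE mulrC mul_conjC_ge0.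
have quad_w : quadmx w = toC lam * sqnormmx w.
  by rewrite /quadmx -mulmxA Tw -scalemxAr mxE.
have /rayleigh_max_eigen Tu : toC lam * sqnormmx u <= quadmx u.
  rewrite sqnormmx_abs -quad_w (le_trans _ (quadmx_abs w)) // real_ler_norm //.
  rewrite quad_w realM ?(ger0_real sqnorm_w_ge0) //.
  by apply/complex_realP; exists lam.
have u_real k : u k 0 = toC (complex.Re (u k 0)) by rewrite RRe_real // mxE normr_real.
have u_ge0 k : 0 <= complex.Re (u k 0) by rewrite -ler0c -u_real mxE normr_ge0.
have [k uk_neq0] : exists k, complex.Re (u k 0) != 0.
  have [k wk_neq0] : exists k, w k 0 != 0.
    apply/existsP; apply: contraNT w_neq0 => /existsPn w0.
    by apply/eqP/matrixP => k j; rewrite (ord1 j) mxE; apply/eqP/negPn/w0.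
  exists k; apply: contra wk_neq0 => /eqP u0.
  by have := u_real k; rewrite u0 rmorph0 mxE => /eqP; rewrite normr_eq0.
clearbody u; exists lam, (fun k => complex.Re (u k 0)); split => [//||i].
  by exists k.
apply: (@complexI R); have /matrixP /(_ i 0) := Tu.
rewrite !mxE rmorphM rmorph_sum /= -u_real => <-.
by apply: eq_bigr => j _; rewrite rmorphM /= -u_real !mxE.
Qed.

End SymmetricPerron.

Section PositiveMatrix.
Variables (R : realFieldType) (n : nat) (T : 'M[R]_n.+1) (lam : R).
Hypothesis T_gt0 : forall i j, 0 < T i j.

Lemma nonneg_eigenvector_gt0 (u : 'I_n.+1 -> R) :
  (forall k, 0 <= u k) -> (exists k, u k != 0) ->
  (forall k, \sum_i T k i * u i = lam * u k) -> forall k, 0 < u k.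
Proof.
move=> u_ge0 [i ui_neq0] u_eigen k; rewrite lt_def u_ge0 andbT.
apply: contraTneq isT => uk0.
have : 0 < \sum_j T k j * u j.
  rewrite (bigD1 i) //=; apply: ltr_pwDl.
    by rewrite mulr_gt0 // lt_def ui_neq0 u_ge0.
  by apply: sumr_ge0 => j _; apply: mulr_ge0 (ltW (T_gt0 k j)) (u_ge0 j).
by rewrite u_eigen uk0 mulr0 ltxx.
Qed.

(* The minimum of x / v is attained at some k0; then x - c v >= 0 vanishes at
   k0, and row k0 of T, whose entries are all positive, forces x - c v = 0. *)
Lemma pos_eigenvector_unique (v x : 'I_n.+1 -> R) :
  (forall k, 0 < v k) ->
  (forall k, \sum_i T k i * v i = lam * v k) ->
  (forall k, \sum_i T k i * x i = lam * x k) ->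
  forall k, x k = x ord0 / v ord0 * v k.
Proof.
move=> v_gt0 v_eigen x_eigen.
pose k0 := [arg min_(k < ord0) (x k / v k)]%O.
pose c := x k0 / v k0.
have c_min k : c <= x k / v k by rewrite /c /k0; case: arg_minP => // j _; apply.
have d_ge0 k : 0 <= x k - c * v k by rewrite subr_ge0 -ler_pdivlMr.
have d_k0 : x k0 - c * v k0 = 0 by rewrite /c divfK ?subrr // gt_eqF.
have : \sum_i T k0 i * (x i - c * v i) = 0.
  under eq_bigr do rewrite mulrBr mulrCA.
  by rewrite sumrB -mulr_sumr x_eigen v_eigen mulrCA -mulrBr d_k0 mulr0.
move/(@psumr_eq0P _ _ xpredT _ (fun i _ => mulr_ge0 (ltW (T_gt0 k0 i)) (d_ge0 i))).
move=> d0; have x_cv i : x i = c * v i.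
  by apply/eqP; rewrite -subr_eq0; have /eqP := d0 i isT; rewrite mulf_eq0 gt_eqF.
by move=> k; rewrite !x_cv mulfK ?gt_eqF.
Qed.

End PositiveMatrix.

Section SchurTest.
Variable R : realFieldType.

Lemma weighted_cauchy_schwarz n (a v y : 'I_n -> R) :
  (forall l, 0 <= a l) -> (forall l, 0 < v l) ->
  (\sum_l a l * y l) ^+ 2 <= (\sum_l a l * v l) * (\sum_l a l * y l ^+ 2 / v l).
Proof.
move=> a_ge0 v_gt0.
have : 0 <= \sum_l \sum_k a l * a k * v l * v k * (y l / v l - y k / v k) ^+ 2.
  do 2!apply: sumr_ge0 => ? _.
  by rewrite mulr_ge0 ?sqr_ge0 // !mulr_ge0 // ltW.
have -> : \sum_l \sum_k a l * a k * v l * v k * (y l / v l - y k / v k) ^+ 2 =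
  (\sum_l a l * y l ^+ 2 / v l) * (\sum_k a k * v k)
  + (\sum_l a l * v l) * (\sum_k a k * y k ^+ 2 / v k)
  - 2 * ((\sum_l a l * y l) * (\sum_k a k * y k)).
  rewrite !big_distrlr mulr_sumr -!big_split -sumrB /=; apply: eq_bigr => l _.
  rewrite mulr_sumr -!big_split -sumrB /=; apply: eq_bigr => k _.
  have := v_gt0 l; have := v_gt0 k => vk vl.
  by field; rewrite !gt_eqF.
lra.
Qed.

Lemma schur_test n (A : 'I_n -> 'I_n -> R) (v y : 'I_n -> R) (c : R) :
  (forall k l, 0 <= A k l) -> (forall l, 0 < v l) ->
  (forall k, \sum_l A k l * v l = c * v k) ->
  (forall l, \sum_k A k l * v k = c * v l) ->
  \sum_k (\sum_l A k l * y l) ^+ 2 <= c ^+ 2 * \sum_l y l ^+ 2.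
Proof.
move=> A_ge0 v_gt0 A_row A_col.
apply: le_trans (ler_sum _ (fun k _ => weighted_cauchy_schwarz y (A_ge0 k) v_gt0)) _.
have col_sum l : \sum_k v k * (A k l * y l ^+ 2 / v l) = c * y l ^+ 2.
  transitivity ((\sum_k A k l * v k) * (y l ^+ 2 / v l)).
    by rewrite mulr_suml; apply: eq_bigr => k _; ring.
  by rewrite A_col; have := v_gt0 l => vl; field; rewrite gt_eqF.
under eq_bigr do rewrite A_row -mulrA mulr_sumr.
rewrite -mulr_sumr exchange_big /=; under eq_bigr do rewrite col_sum.
by rewrite -mulr_sumr mulrA -expr2.
Qed.

End SchurTest.

Lemma cvnormE (R : realType) n (x : 'cV[complex R]_n) :
  cvnorm x = Num.sqrt (\sum_k (complex.Re (x k 0) ^+ 2 + complex.Im (x k 0) ^+ 2)).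
Proof.
rewrite /cvnorm; congr Num.sqrt.
by under eq_bigr do rewrite -add_Re2_Im2; rewrite -rmorph_sum.
Qed.

Section OperatorNorm.
Variables (R : realType) (n : nat) (M : 'M[R]_n.+1) (v : 'I_n.+1 -> R) (c : R).
Hypotheses (M_ge0 : forall k l, 0 <= M k l) (v_gt0 : forall k, 0 < v k).
Hypothesis M_row : forall k, \sum_l M k l * v l = c * v k.
Hypothesis M_col : forall l, \sum_k M k l * v k = c * v l.
Local Notation toC := (real_complex R).
Local Notation sqnormc z := (complex.Re z ^+ 2 + complex.Im z ^+ 2).

Let c_ge0 : 0 <= c.
Proof.
rewrite -(pmulr_lge0 _ (v_gt0 ord0)) -M_row.
by apply: sumr_ge0 => l _; apply: mulr_ge0 (M_ge0 _ _) (ltW (v_gt0 l)).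
Qed.

Lemma cvnorm_mulmx_le x : cvnorm (map_mx toC M *m x) <= c * cvnorm x.
Proof.
pose y l : R := Num.sqrt (sqnormc (x l 0)).
have normc_sqrt z : `|z| = toC (Num.sqrt (sqnormc z)) := normc_def z.
have entry_le k : sqnormc ((map_mx toC M *m x) k 0) <= (\sum_l M k l * y l) ^+ 2.
  have sum_ge0 : 0 <= \sum_l M k l * y l.
    by apply: sumr_ge0 => l _; rewrite mulr_ge0 ?sqrtr_ge0.
  rewrite -[sqnormc _]sqr_sqrtr ?addr_ge0 ?sqr_ge0 // lerXn2r ?nnegrE ?sqrtr_ge0 //.
  rewrite -(@lecR R) -normc_sqrt mxE rmorph_sum /=.
  apply: le_trans (ler_norm_sum _ _ _) _; apply: ler_sum => l _.
  by rewrite !mxE normrM ger0_norm ?ler0c // normc_sqrt rmorphM.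
rewrite !cvnormE -(ger0_norm c_ge0) -sqrtr_sqr -sqrtrM ?sqr_ge0 // ler_sqrt; last first.
  by rewrite mulr_ge0 ?sqr_ge0 // sumr_ge0 // => k _; rewrite addr_ge0 ?sqr_ge0.
apply: le_trans (ler_sum _ (fun k _ => entry_le k)) _.
have -> : \sum_l sqnormc (x l 0) = \sum_l y l ^+ 2.
  by apply: eq_bigr => l _; rewrite sqr_sqrtr ?addr_ge0 ?sqr_ge0.
exact: schur_test.
Qed.

Lemma opnorm_schur : opnorm (map_mx toC M) = c.
Proof.
have sum_v_gt0 : 0 < \sum_k v k ^+ 2.
  rewrite (bigD1 ord0) //=; apply: ltr_pwDl; first exact: exprn_gt0.
  by apply: sumr_ge0 => k _; apply: sqr_ge0.
pose s := Num.sqrt (\sum_k v k ^+ 2).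
have sum_sqr_unit : \sum_k (v k / s) ^+ 2 = 1.
  under eq_bigr do rewrite expr_div_n.
  by rewrite -mulr_suml sqr_sqrtr ?divff ?gt_eqF // ltW.
have sqnormc_real (r : R) : sqnormc (toC r) = r ^+ 2 by rewrite /= expr0n addr0.
pose u : 'cV[complex R]_n.+1 := \col_k toC (v k / s).
have u_norm : cvnorm u = 1.
  by rewrite cvnormE; under eq_bigr do rewrite mxE sqnormc_real; rewrite sum_sqr_unit sqrtr1.
have Mu_entry k : (map_mx toC M *m u) k 0 = toC (c * (v k / s)).
  rewrite mxE; under eq_bigr do rewrite !mxE -rmorphM.
  by rewrite -rmorph_sum mulrA -M_row mulr_suml; congr toC; apply: eq_bigr => l _; rewrite mulrA.
have Mu_norm : cvnorm (map_mx toC M *m u) = c.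
  rewrite cvnormE; under eq_bigr do rewrite Mu_entry sqnormc_real exprMn.
  by rewrite -mulr_sumr sum_sqr_unit mulr1 sqrtr_sqr ger0_norm.
apply/eqP; rewrite eq_le; apply/andP; split.
  apply: ge_sup; first by exists c, u; rewrite u_norm.
  move=> _ [x [x_le1 ->]]; apply: le_trans (cvnorm_mulmx_le x) _.
  by rewrite ler_piMr.
apply: ub_le_sup; last by exists u; rewrite u_norm Mu_norm.
exists c => _ [x [x_le1 ->]]; apply: le_trans (cvnorm_mulmx_le x) _.
by rewrite ler_piMr.
Qed.

End OperatorNorm.

Section FusionMatrices.
Variables (R : numDomainType) (m : nat) (F : fusion_ring m).
Local Notation N := (fr_N F).
Local Notation du := (fr_dual F).

Definition left_mx a : 'M[R]_m.+1 := \matrix_(k, b) (N a b k)%:R.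
Definition right_mx j : 'M[R]_m.+1 := \matrix_(k, i) (N i j k)%:R.
Definition right_sum_mx : 'M[R]_m.+1 := \sum_j right_mx j.

Lemma natr_fr_assoc a b c d :
  \sum_p (N a b p)%:R * (N p c d)%:R = \sum_p (N b c p)%:R * (N a p d)%:R :> R.
Proof.
under eq_bigr do rewrite -natrM; under [RHS]eq_bigr do rewrite -natrM.
by rewrite -!natr_sum fr_assoc.
Qed.

Lemma left_mx_ge0 a k b : 0 <= left_mx a k b.
Proof. by rewrite mxE ler0n. Qed.

Lemma left_mx0 : left_mx ord0 = 1%:M.
Proof. by apply/matrixP => k b; rewrite !mxE fr_unitl eq_sym. Qed.

Lemma left_mx_tr a : (left_mx a)^T = left_mx (du a).
Proof. by apply/matrixP => k b; rewrite !mxE fr_N_duall. Qed.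

Lemma left_mxM a b : left_mx a *m left_mx b = \sum_k (N a b k)%:R *: left_mx k.
Proof.
apply/matrixP => x y; rewrite !mxE summxE.
under eq_bigr do rewrite !mxE; under [RHS]eq_bigr do rewrite !mxE.
by rewrite natr_fr_assoc; apply: eq_bigr => p _; rewrite mulrC.
Qed.

Lemma left_right_mxC a j : left_mx a *m right_mx j = right_mx j *m left_mx a.
Proof.
apply/matrixP => k i; rewrite !mxE.
under eq_bigr do rewrite !mxE; under [RHS]eq_bigr do rewrite !mxE.
transitivity (\sum_p (N i j p)%:R * (N a p k)%:R : R).
  by apply: eq_bigr => p _; rewrite mulrC.
by rewrite -natr_fr_assoc; apply: eq_bigr => p _; rewrite mulrC.
Qed.

Lemma left_right_sum_mxC a : left_mx a *m right_sum_mx = right_sum_mx *m left_mx a.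
Proof.
rewrite mulmx_suml mulmx_sumr; apply: eq_bigr => j _; exact: left_right_mxC.
Qed.

Lemma right_sum_mxE k i : right_sum_mx k i = (\sum_j N i j k)%:R.
Proof. by rewrite summxE natr_sum; apply: eq_bigr => j _; rewrite mxE. Qed.

Lemma right_sum_mx_tr : right_sum_mx^T = right_sum_mx.
Proof.
apply/matrixP => k i; rewrite mxE !right_sum_mxE (reindex_inj (@fr_dual_inj _ F)).
by congr _%:R; apply: eq_bigr => j _; rewrite fr_N_dualr.
Qed.

(* x_i x_i^* contains x_0 = 1, so (x_i x_i^* ) x_k contains x_k, and by
   associativity some x_i x_p with p in x_i^* x_k contains x_k as well. *)
Lemma right_sum_mx_gt0 k i : 0 < right_sum_mx k i.
Proof.
rewrite right_sum_mxE ltr0n.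
have : (0 < \sum_p N (du i) k p * N i p k)%N.
  rewrite -fr_assoc (bigD1 ord0) //= fr_rigid fr_dualK eqxx fr_unitl eqxx.
  by rewrite muln1 addnC addn1.
case: (posnP (\sum_j N i j k)) => // /eqP; rewrite sum_nat_eq0 => /forallP N0.
by rewrite big1 // => p _; rewrite (eqP (implyP (N0 p) isT)) muln0.
Qed.

End FusionMatrices.

Section FrobeniusPerronDimension.
Variables (R : realType) (m : nat) (F : fusion_ring m) (lam : R) (v : 'I_m.+1 -> R).
Hypothesis v_gt0 : forall k, 0 < v k.
Hypothesis v_eigen : forall k, \sum_i right_sum_mx R F k i * v i = lam * v k.
Local Notation N := (fr_N F).
Local Notation du := (fr_dual F).
Local Notation left_mx := (left_mx R F).
Local Notation vc := (\col_k v k).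

(* The Frobenius-Perron dimension d(a): the eigenvalue of left_mx a at the
   Perron vector v (left_mx_eigen), read off at coordinate 0. *)
Definition fpdim a := (left_mx a *m vc) ord0 0 / v ord0.

Lemma left_mx_eigen a : left_mx a *m vc = fpdim a *: vc.
Proof.
set x := left_mx a *m vc.
have Tv : right_sum_mx R F *m vc = lam *: vc.
  apply/matrixP => k j; rewrite (ord1 j) !mxE -v_eigen.
  by apply: eq_bigr => i _; rewrite mxE.
have x_eigen k : \sum_i right_sum_mx R F k i * x i 0 = lam * x k 0.
  have /matrixP /(_ k 0) : right_sum_mx R F *m x = lam *: x.
    by rewrite /x mulmxA -left_right_sum_mxC -mulmxA Tv scalemxAr.
  by rewrite [LHS]mxE [RHS]mxE.
have x_prop := pos_eigenvector_unique (@right_sum_mx_gt0 R m F)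
  (x := fun i => x i 0) v_gt0 v_eigen x_eigen.
by apply/matrixP => k j; rewrite (ord1 j) [RHS]mxE [vc k 0]mxE; apply: x_prop.
Qed.

Lemma left_mx_row_eigen a k : \sum_l (N a l k)%:R * v l = fpdim a * v k.
Proof.
have /matrixP /(_ k 0) := left_mx_eigen a.
by rewrite !mxE => <-; apply: eq_bigr => l _; rewrite !mxE.
Qed.

Lemma fpdim0 : fpdim ord0 = 1.
Proof. by rewrite /fpdim left_mx0 mul1mx mxE divff ?gt_eqF. Qed.

Lemma fpdimM a b : fpdim a * fpdim b = \sum_k (N a b k)%:R * fpdim k.
Proof.
have : (fpdim a * fpdim b) *: vc = (\sum_k (N a b k)%:R * fpdim k) *: vc.
  rewrite mulrC -scalerA -left_mx_eigen scalemxAr -left_mx_eigen mulmxA left_mxM.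
  rewrite mulmx_suml scaler_suml; apply: eq_bigr => k _.
  by rewrite -scalemxAl left_mx_eigen scalerA.
by move/matrixP/(_ ord0 0); rewrite !mxE => /(mulIf (lt0r_neq0 (v_gt0 ord0))).
Qed.

(* v^T L_a v equals d(a) v^T v, and also d(a^* ) v^T v since v^T L_a = (L_(a^* ) v)^T. *)
Lemma fpdim_dual a : fpdim (du a) = fpdim a.
Proof.
have vv_gt0 : 0 < (vc^T *m vc) 0 0.
  rewrite mxE (bigD1 ord0) //= !mxE; apply: ltr_pwDl; first by rewrite mulr_gt0.
  by apply: sumr_ge0 => i _; rewrite !mxE mulr_ge0 ?ltW.
apply: (mulIf (lt0r_neq0 vv_gt0)).
have /matrixP/(_ 0 0) : fpdim (du a) *: (vc^T *m vc) = fpdim a *: (vc^T *m vc).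
  rewrite scalemxAr -left_mx_eigen mulmxA -[vc^T *m left_mx (du a)]trmxK.
  by rewrite trmx_mul trmxK left_mx_tr fr_dualK left_mx_eigen linearZ /= -scalemxAl.
by rewrite mxE => ->; rewrite mxE.
Qed.

Lemma left_mx_col_eigen a l : \sum_k (N a l k)%:R * v k = fpdim a * v l.
Proof.
rewrite -fpdim_dual -left_mx_row_eigen; apply: eq_bigr => k _.
by rewrite fr_N_duall.
Qed.

Lemma opnorm_fusion_matrix j : opnorm (fusion_matrix R F j) = fpdim j.
Proof.
have -> : fusion_matrix R F j = map_mx (real_complex R) (left_mx j).
  by apply/matrixP => k l; rewrite !mxE rmorph_nat.
apply: opnorm_schur (@left_mx_ge0 R m F j) v_gt0 _ _ => [k|l].
  by rewrite -left_mx_row_eigen; apply: eq_bigr => l _; rewrite mxE.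
by rewrite -left_mx_col_eigen; apply: eq_bigr => k _; rewrite mxE.
Qed.

Definition primary_mx := \sum_j fpdim j *: left_mx j.

Lemma primary_mx_tr : primary_mx^T = primary_mx.
Proof.
rewrite /primary_mx linear_sum (reindex_inj (@fr_dual_inj _ F)) /=.
by apply: eq_bigr => j _; rewrite linearZ /= left_mx_tr fr_dualK fpdim_dual.
Qed.

Lemma left_mx_primary i : left_mx i *m primary_mx = fpdim i *: primary_mx.
Proof.
rewrite mulmx_sumr; under eq_bigr do rewrite -scalemxAr left_mxM scaler_sumr.
rewrite exchange_big /= scaler_sumr; apply: eq_bigr => k _.
under eq_bigr do rewrite scalerA.
rewrite -scaler_suml scalerA; congr (_ *: _).
rewrite -fpdim_dual fpdimM; apply: eq_bigr => j _.
by rewrite mulrC fr_N_duall.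
Qed.

Lemma primary_mx_sqr : primary_mx *m primary_mx = (\sum_i fpdim i ^+ 2) *: primary_mx.
Proof.
rewrite {1}/primary_mx mulmx_suml scaler_suml; apply: eq_bigr => i _.
by rewrite -scalemxAl left_mx_primary scalerA.
Qed.

Lemma sum_fpdim_sqr_gt0 : 0 < \sum_i fpdim i ^+ 2.
Proof.
rewrite (bigD1 ord0) //= fpdim0 expr1n; apply: ltr_pwDl => //.
by apply: sumr_ge0 => i _; apply: sqr_ge0.
Qed.

Lemma sum_opnorm_fusion_matrix :
  \sum_j (opnorm (fusion_matrix R F j))%:C%C *: fusion_matrix R F j =
  map_mx (real_complex R) primary_mx.
Proof.
apply/matrixP => a b; rewrite mxE !summxE rmorph_sum; apply: eq_bigr => j _.
rewrite opnorm_fusion_matrix [LHS]mxE [in RHS]mxE.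
by rewrite [fusion_matrix _ _ _ _ _]mxE [left_mx _ _ _]mxE [in RHS]rmorphM rmorph_nat.
Qed.

End FrobeniusPerronDimension.

Lemma psd_symmetric_sqr (R : realType) n (A : 'M[R]_n) (c : R) :
  A^T = A -> A *m A = c *: A -> 0 < c -> psd (map_mx (real_complex R) A).
Proof.
move=> A_tr A_sqr c_gt0 x.
set Ac := map_mx (real_complex R) A; set xs := map_mx Num.conj x; set y := Ac *m x.
have Ac_conj : map_mx Num.conj Ac = Ac.
  by rewrite -map_mx_comp; apply: eq_map_mx => r /=; rewrite conj_Creal // complex_real.
have Ac_tr : Ac^T = Ac.
  by apply/matrixP => i j; rewrite !mxE -[in RHS]A_tr mxE.
have xsAc : xs^T *m Ac = (map_mx Num.conj y)^T.
  by rewrite map_mxM Ac_conj trmx_mul Ac_tr.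
have cQ : real_complex R c * (xs^T *m Ac *m x) 0 0 = ((map_mx Num.conj y)^T *m y) 0 0.
  rewrite -xsAc /y mulmxA -[xs^T *m Ac *m Ac]mulmxA /Ac -map_mxM A_sqr map_mxZ.
  by rewrite -scalemxAr -scalemxAl [RHS]mxE.
rewrite -(pmulr_rge0 _ (_ : 0 < real_complex R c)) ?ltcR // cQ mxE.
by apply: sumr_ge0 => k _; rewrite !mxE mulrC mul_conjC_ge0.
Qed.

Local Open Scope complex_scope.
Unset Implicit Arguments.

Theorem mainTheorem15 (R : realType) (m : nat) (F : fusion_ring m) :
  psd (\sum_(j < m.+1) ((opnorm (fusion_matrix R F j))%:C *: fusion_matrix R F j)).
Proof.
have [l [u [u_ge0 u_neq0 u_eigen]]] := symmetric_nonneg_eigenvector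
  (right_sum_mx_tr R F) (fun k i => ltW (right_sum_mx_gt0 R F k i)).
have u_gt0 := nonneg_eigenvector_gt0 (right_sum_mx_gt0 R F) u_ge0 u_neq0 u_eigen.
rewrite (sum_opnorm_fusion_matrix u_gt0 u_eigen).
exact: psd_symmetric_sqr (primary_mx_tr u_gt0 u_eigen)
  (primary_mx_sqr u_gt0 u_eigen) (sum_fpdim_sqr_gt0 F u_gt0).
Qed.
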